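(* Let $X,X',Y,Y'$ be integer-valued random variables such that $X'$ and $Y'$ take values in $\{0,1\}$, $X\succeq Y$, and for all $x\in\mathbb{Z}$, $(X'\mid X=x)\succeq(Y'\mid Y=x)$. Then $X+X'\succeq Y+Y'$.
   Context: For real random variables, $X\succeq Y$ ($X$ stochastically dominates $Y$) means $\Pr[X\ge x]\ge\Pr[Y\ge x]$ for all real $x$; $(X'\mid X=x)$ denotes the conditional distribution of $X'$ given $X=x$. *)

From HB Require Import structures.
From mathcomp Require Import all_boot all_order all_algebra.
From mathcomp Require Import all_classical all_reals all_analysis.
Set Implicit Arguments. Unset Strict Implicit. Unset Printing Implicit Defensive.
Import Order.TTheory GRing.Theory Num.Theory.
Local Open Scope classical_set_scope.
Local Open Scope ring_scope.

Definition stoch_dom d1 d2 (T1 : measurableType d1) (T2 : measurableType d2)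
  (R : realType) (P : probability T1 R) (X : T1 -> R)
  (Q : probability T2 R) (Y : T2 -> R) : Prop :=
  forall x : R, (Q [set w | (x <= Y w)%R] <= P [set w | (x <= X w)%R])%E.

(* elementary conditional probability P(A | B) = P(A & B) / P(B)
   (only used when P(B) > 0) *)
Definition cprob d (T : measurableType d) (R : realType) (P : probability T R)
  (A B : set T) : R := fine (P (A `&` B)) / fine (P B).

Definition cond_stoch_dom d1 d2 (T1 : measurableType d1) (T2 : measurableType d2)
  (R : realType) (P : probability T1 R) (X' : T1 -> R) (B : set T1)
  (Q : probability T2 R) (Y' : T2 -> R) (C : set T2) : Prop :=
  forall x : R, cprob Q [set w | x <= Y' w] C <= cprob P [set w | x <= X' w] B.

(* Put s := ceil x.  For integer-valued X and {0,1}-valued X', the event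
   X + X' >= x splits disjointly into X >= s and (X = s - 1, X' = 1), while
   X >= x - 1 splits into X >= s and X = s - 1.  With a = P[X >= s],
   b = P[X = s - 1] and p = P[X' = 1 | X = s - 1] (and a', b', q for Y, Y'),
   the hypotheses give a' <= a, a' + b' <= a + b and q <= p, and then
   a + p b - (a' + q b') = (1 - p)(a - a') + p((a + b) - (a' + b')) + (p - q) b'
   is nonnegative. *)

From HB Require Import structures.
From mathcomp Require Import all_boot all_order all_algebra.
From mathcomp Require Import all_classical all_reals all_analysis.
From mathcomp Require Import zify lra.
Import Order.TTheory GRing.Theory Num.Theory.
Local Open Scope classical_set_scope.
Local Open Scope ring_scope.

Lemma ler_mixture (R : realFieldType) (a a' b b' c c' : R) :
  a' <= a -> a' + b' <= a + b -> 0 <= c <= b -> 0 <= c' <= b' ->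
  (0 < b -> 0 < b' -> c' / b' <= c / b) -> a' + c' <= a + c.
Proof.
move=> le_a le_ab /andP[c_ge0 le_cb] /andP[c'_ge0 le_c'b'] le_ratio.
have [b_le0|b_gt0] := lerP b 0.
  have -> : c = 0 by apply/eqP; rewrite eq_le c_ge0 (le_trans le_cb b_le0).
  lra.
have [b'_le0|b'_gt0] := lerP b' 0.
  have -> : c' = 0 by apply/eqP; rewrite eq_le c'_ge0 (le_trans le_c'b' b'_le0).
  lra.
have {le_ratio} := le_ratio b_gt0 b'_gt0.
set p := c / b; set q := c' / b' => le_qp.
have cE : c = p * b by rewrite /p divfK ?gt_eqF.
have c'E : c' = q * b' by rewrite /q divfK ?gt_eqF.
have p_le1 : p <= 1 by rewrite /p ler_pdivrMr // mul1r.
have q_ge0 : 0 <= q by rewrite /q divr_ge0 // ltW.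
have ge0_a : 0 <= (1 - p) * (a - a') by apply: mulr_ge0; lra.
have ge0_ab : 0 <= p * ((a + b) - (a' + b')) by apply: mulr_ge0; lra.
have ge0_pq : 0 <= (p - q) * b' by apply: mulr_ge0; lra.
rewrite cE c'E; nra.
Qed.

Section IntegerThresholds.
Variable R : archiRealDomainType.

Lemma ler_subr1_int (x y : R) : y \is a Num.int ->
  (x - 1 <= y) <-> (x <= y \/ y = (Num.ceil x - 1)%:~R).
Proof.
move=> /ceilK <-; set k := Num.ceil y.
rewrite lerBlDr -[1]/(1%:~R) -intrD -!ceil_le_int.
split=> [|[|/eqP]]; last by rewrite eqr_int => /eqP ->; lia.
- by have [|] := leP (Num.ceil x) k; [left|right; congr intr; lia].
- lia.
Qed.

Lemma ler_add01_int (x y e : R) : y \is a Num.int -> (e = 0 \/ e = 1) ->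
  (x <= y + e) <-> (x <= y \/ 1 <= e /\ y = (Num.ceil x - 1)%:~R).
Proof.
move=> y_int [->|->].
  rewrite addr0 ler10; split; [by left | by case=> // -[]].
rewrite -lerBlDr ler_subr1_int // lexx.
by split=> -[|]; [left|right|left|case=> _; right].
Qed.

Variables (T : Type) (X X' : T -> R).

Lemma setI_ler_ceilB1 (x : R) :
  [set w | x <= X w] `&` [set w | X w = (Num.ceil x - 1)%:~R] = set0.
Proof.
apply/seteqP; split=> // w [/= le_xX X_eq].
by move: (ceilB1_lt x); rewrite -X_eq ltNge le_xX.
Qed.

Hypothesis X_int : forall w, X w \is a Num.int.
Hypothesis X'01 : forall w, X' w = 0 \/ X' w = 1.

Lemma set_ler_subr1 (x : R) : [set w | x - 1 <= X w] =
  [set w | x <= X w] `|` [set w | X w = (Num.ceil x - 1)%:~R].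
Proof. by apply/seteqP; split=> w /=; rewrite (ler_subr1_int _ _ (X_int w)). Qed.

Lemma set_ler_add01 (x : R) : [set w | x <= X w + X' w] =
  [set w | x <= X w] `|`
  ([set w | 1 <= X' w] `&` [set w | X w = (Num.ceil x - 1)%:~R]).
Proof.
by apply/seteqP; split=> w /=; rewrite (ler_add01_int _ _ _ (X_int w) (X'01 w)).
Qed.

End IntegerThresholds.

Lemma measurable_ler_mfun d (T : measurableType d) (R : realType)
  (X : {mfun T >-> R}) (x : R) : measurable [set w | x <= X w].
Proof.
have -> : [set w | x <= X w] = X @^-1` `[x, +oo[%classic.
  by apply/seteqP; split=> w /=; rewrite in_itv /= andbT.
exact: measurable_funPTI (measurable_itv _).
Qed.

Lemma measurable_eq_mfun d (T : measurableType d) (R : realType)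
  (X : {mfun T >-> R}) (y : R) : measurable [set w | X w = y].
Proof. exact: measurable_funPTI (measurable_set1 _). Qed.

Lemma le_measure_mixture (R : realType)
  d1 (T1 : measurableType d1) (P : probability T1 R) (S E F : set T1)
  d2 (T2 : measurableType d2) (Q : probability T2 R) (S' E' F' : set T2) :
  measurable S -> measurable E -> measurable F ->
  measurable S' -> measurable E' -> measurable F' ->
  S `&` E = set0 -> S' `&` E' = set0 ->
  (Q S' <= P S)%E -> (Q (S' `|` E') <= P (S `|` E))%E ->
  ((0 < P E)%E -> (0 < Q E')%E -> cprob Q F' E' <= cprob P F E) ->
  (Q (S' `|` F' `&` E') <= P (S `|` F `&` E))%E.
Proof.
move=> mS mE mF mS' mE' mF' SE0 S'E'0 le_S le_SE le_cond.
have mFE := measurableI _ _ mF mE; have mF'E' := measurableI _ _ mF' mE'.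
have SFE0 : S `&` (F `&` E) = set0 by rewrite setICA SE0 setI0.
have S'F'E'0 : S' `&` (F' `&` E') = set0 by rewrite setICA S'E'0 setI0.
rewrite !measureU // in le_SE *.
rewrite -[leLHS]fineK ?fin_numD ?fin_num_measure //.
rewrite -[leRHS]fineK ?fin_numD ?fin_num_measure //.
rewrite lee_fin !fineD ?fin_num_measure //.
apply: ler_mixture.
- by rewrite fine_le ?fin_num_measure.
- by move/fine_le: le_SE; rewrite !fineD ?fin_numD ?fin_num_measure //; apply.
- by rewrite fine_ge0 ?measure_ge0 ?fine_le ?fin_num_measure ?measureIr.
- by rewrite fine_ge0 ?measure_ge0 ?fine_le ?fin_num_measure ?measureIr.
- move=> PE_gt0 QE_gt0; apply: le_cond.
  + by rewrite -[P E]fineK ?fin_num_measure ?lte_fin.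
  + by rewrite -[Q E']fineK ?fin_num_measure ?lte_fin.
Qed.

Theorem lemma3p7 (R : realType)
  (d1 : measure_display) (T1 : measurableType d1) (P : probability T1 R)
  (d2 : measure_display) (T2 : measurableType d2) (Q : probability T2 R)
  (X X' : {RV P >-> R}) (Y Y' : {RV Q >-> R})
  (hXint : forall w, X w \is a Num.int)
  (hYint : forall w, Y w \is a Num.int)
  (hX'01 : forall w, X' w = 0 \/ X' w = 1)
  (hY'01 : forall w, Y' w = 0 \/ Y' w = 1)
  (hdom : stoch_dom P X Q Y)
  (hcond : forall x : int,
     (0 < P [set w | X w = x%:~R])%E -> (0 < Q [set w | Y w = x%:~R])%E ->
     cond_stoch_dom P X' [set w | X w = x%:~R] Q Y' [set w | Y w = x%:~R]) :
  stoch_dom P (fun w => X w + X' w) Q (fun w => Y w + Y' w).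
Proof.
move=> x; rewrite !set_ler_add01 //.
apply: le_measure_mixture; try solve
  [exact: measurable_ler_mfun | exact: measurable_eq_mfun | exact: setI_ler_ceilB1].
- exact: hdom.
- by rewrite -!set_ler_subr1 //; exact: hdom.
- by move=> PE_gt0 QE_gt0; exact: hcond.
Qed.
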